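(* Let $n\in\mathbb N$ with $n\ge 10$. Then $\mathrm{ex}(2n-7;T_n^3)=n^2-8n+22$.
   Context: All graphs are finite simple graphs. For a graph $L$, $\mathrm{ex}(p;L)$ denotes the maximum number of edges in a graph on $p$ vertices that contains no subgraph isomorphic to $L$. For $n\ge 6$, $T_n^3$ is the tree on vertex set $\{v_0,\ldots,v_{n-1}\}$ with edge set $\{v_0v_1,v_0v_2,\ldots,v_0v_{n-4},\ v_1v_{n-3},\ v_1v_{n-2},\ v_1v_{n-1}\}$. *)

From mathcomp Require Import all_boot.
Set Implicit Arguments. Unset Strict Implicit. Unset Printing Implicit Defensive.

Definition is_graph (V : finType) (E : {set {set V}}) : bool :=
  [forall e in E, #|e| == 2].

Definition contains_copy (W V : finType) (F : {set {set W}}) (E : {set {set V}}) : bool :=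
  [exists f : {ffun W -> V}, injectiveb f && [forall e in F, (f @: e) \in E]].

Definition ex (p : nat) (W : finType) (F : {set {set W}}) : nat :=
  \max_(E : {set {set 'I_p}} | is_graph E && ~~ contains_copy F E) #|E|.

(* The tree T_n^3 on vertices v_0,...,v_{n-1} (identified with 'I_n):
   edges v0 v_i (1 <= i <= n-4) and v1 v_j (n-3 <= j <= n-1). *)
Definition T3_adj (n : nat) (x y : 'I_n) : bool :=
  ((val x == 0) && (1 <= val y <= n - 4)) ||
  ((val x == 1) && (n - 3 <= val y <= n - 1)).

Definition T3 (n : nat) : {set {set 'I_n}} :=
  [set [set x; y] | x in 'I_n, y in 'I_n & T3_adj x y].

(* Write k = n - 4, so that the host graphs have 2k + 1 vertices.  If a
   T_n^3-free graph has an edge ab with deg a >= k and deg b >= 4, then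
   |N(a) u N(b) \ {a, b}| <= k + 1, for otherwise a can play v_0 and b can
   play v_1.  Fix a vertex u of maximum degree D and split the remaining
   vertices into N(u) and the set R of non-neighbours, |R| = 2k - D.  The
   local condition bounds the degrees and R-degrees of the vertices of N(u);
   a case analysis on D (D < k, D = k, D = k + 1, D = k + 2, D > k + 2) then
   gives a degree sum of at most 2k^2 + 12, i.e. at most k^2 + 6 =
   n^2 - 8n + 22 edges.  The disjoint union K_{n-1} + K_{n-6} attains the
   bound: it has 2n - 7 vertices and, T_n^3 being connected on n vertices,
   it contains no copy of it. *)

From mathcomp Require Import all_boot zify.
Set Implicit Arguments. Unset Strict Implicit. Unset Printing Implicit Defensive.

Lemma sum_pred_card (T : finType) (A : {set T}) (P : pred T) :
  \sum_(x in A) P x = #|[set x in A | P x]|.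
Proof.
rewrite -sum1_card big_mkcond [RHS]big_mkcond; apply: eq_bigr => x _.
by rewrite inE; case: (x \in A); case: (P x).
Qed.

Lemma leq_sum_subset (T : finType) (A B : {set T}) (F : T -> nat) :
  A \subset B -> \sum_(x in A) F x <= \sum_(x in B) F x.
Proof.
move=> /subsetP sAB; rewrite big_mkcond [X in _ <= X]big_mkcond; apply: leq_sum => x _.
by case: ifP => // /sAB ->.
Qed.

Lemma leq_sum_const (T : finType) (A : {set T}) (F : T -> nat) c :
  (forall x, x \in A -> F x <= c) -> \sum_(x in A) F x <= #|A| * c.
Proof. by move=> le_Fc; rewrite -sum_nat_const; apply: leq_sum. Qed.

Lemma card_setI_ltn (T : finType) (A B : {set T}) y :
  y \in A -> y \notin B -> #|A :&: B| < #|A|.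
Proof.
move=> yA yB; rewrite -(cardsID B A) -addn1 leq_add2l card_gt0.
by apply/set0Pn; exists y; rewrite inE yA yB.
Qed.

Lemma cards_disjointU (T : finType) (A B : {set T}) :
  [disjoint A & B] -> #|A :|: B| = #|A| + #|B|.
Proof. by move=> dAB; case: (leq_card_setU A B) => _; rewrite dAB => /eqP. Qed.

Lemma leq_card_disjointU (T : finType) (A B C : {set T}) :
  [disjoint A & B] -> A :|: B \subset C -> #|A| + #|B| <= #|C|.
Proof. by move=> /cards_disjointU <- /subset_leq_card. Qed.

Lemma exists_subset_card (T : finType) (X : {set T}) m :
  m <= #|X| -> exists2 A : {set T}, A \subset X & #|A| = m.
Proof.
rewrite -bin_gt0 -cards_draws => /card_gt0P [A].
by rewrite inE => /andP [sAX /eqP cA]; exists A.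
Qed.

Lemma exists_disjoint_subsets (T : finType) (X Y : {set T}) a b :
  a <= #|X| -> b <= #|Y| -> a + b <= #|X :|: Y| ->
  exists A B : {set T},
    [/\ A \subset X, B \subset Y, [disjoint A & B], #|A| = a & #|B| = b].
Proof.
move=> le_aX le_bY le_abXY.
have cXY := cardsU X Y; have cY := cardsID X Y; rewrite setIC in cY.
set c := minn b #|Y :\: X|.
have [B1 sB1 cB1] := @exists_subset_card T (Y :\: X) c (geq_minr _ _).
have [D sD cD] : exists2 D : {set T}, D \subset X :&: Y & #|D| = b - c.
  by apply: exists_subset_card; rewrite /c; lia.
have sDX : D \subset X := subset_trans sD (subsetIl X Y).
have [A sA cA] : exists2 A : {set T}, A \subset X :\: D & #|A| = a.
  by apply: exists_subset_card; rewrite cardsDS // cD /c; lia.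
have dB1X : [disjoint B1 & X].
  rewrite disjoints_subset; apply: subset_trans sB1 _.
  by apply/subsetP => y; rewrite !inE => /andP [].
exists A, (B1 :|: D); split => //.
- exact: subset_trans sA (subsetDl X D).
- by rewrite subUset (subset_trans sB1 (subsetDl Y X)) (subset_trans sD (subsetIr X Y)).
- rewrite disjoints_subset; apply/subsetP => y /(subsetP sA).
  rewrite !inE negb_or => /andP [-> yX]; rewrite andbT.
  by apply: contraL yX => /(subsetP sB1); rewrite inE => /andP [].
- rewrite cards_disjointU ?cB1 ?cD /c; first lia.
  exact: disjointWr sDX dB1X.
Qed.

Definition adj (V : finType) (E : {set {set V}}) (x y : V) : bool := [set x; y] \in E.
Definition nbhd (V : finType) (E : {set {set V}}) (x : V) : {set V} := [set y | adj E x y].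
Definition deg (V : finType) (E : {set {set V}}) (x : V) : nat := #|nbhd E x|.
Definition non_nbhd (V : finType) (E : {set {set V}}) (u : V) : {set V} :=
  ~: (u |: nbhd E u).
Definition joint_nbhd (V : finType) (E : {set {set V}}) (a b : V) : {set V} :=
  (nbhd E a :|: nbhd E b) :\: [set a; b].

Section GraphBasics.
Variables (V : finType) (E : {set {set V}}).
Hypothesis graphE : is_graph E.

Lemma adjC x y : adj E x y = adj E y x.
Proof. by rewrite /adj setUC. Qed.

Lemma in_nbhd x y : (y \in nbhd E x) = adj E x y.
Proof. by rewrite inE. Qed.

Lemma adjxx x : ~~ adj E x x.
Proof. by apply/negP => /(forall_inP graphE); rewrite setUid cards1. Qed.

Lemma deg_edges x : deg E x = \sum_(e in E) (x \in e).
Proof.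
rewrite sum_pred_card.
have -> : [set e in E | x \in e] = (fun y => [set x; y]) @: nbhd E x.
  apply/setP => e; rewrite inE; apply/andP/imsetP => [[eE xe] | [y]].
    have /cards2P [a [b [_ def_e]]] := forall_inP graphE _ eE.
    move: xe eE; rewrite def_e !inE => /orP [] /eqP <- eE.
      by exists b; rewrite ?in_nbhd.
    by exists a; rewrite ?in_nbhd /adj setUC.
  by rewrite in_nbhd => xy ->; rewrite set21.
rewrite card_in_imset // => y z; rewrite !in_nbhd => xy _ exyz.
have : y \in [set x; z] by rewrite -exyz set22.
rewrite !inE => /orP [/eqP yx | /eqP //].
by move: xy; rewrite yx (negbTE (adjxx x)).
Qed.

Lemma handshake : \sum_x deg E x = 2 * #|E|.
Proof.
under eq_bigr do rewrite deg_edges.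
rewrite exchange_big /= mulnC -sum_nat_const; apply: eq_bigr => e eE.
rewrite -(eqP (forall_inP graphE _ eE)) -sum1_card [RHS]big_mkcond.
by apply: eq_bigr => x _; case: (x \in e).
Qed.

Lemma in_non_nbhd u x : (x \in non_nbhd E u) = (x != u) && ~~ adj E u x.
Proof. by rewrite !inE negb_or. Qed.

Lemma joint_nbhdC a b : joint_nbhd E a b = joint_nbhd E b a.
Proof. by rewrite /joint_nbhd setUC [[set b; a]]setUC. Qed.

Lemma joint_nbhdE a b :
  joint_nbhd E a b = (nbhd E a :\ b) :|: (nbhd E b :\ a).
Proof.
apply/setP => x; rewrite !inE.
case: (eqVneq x a) => [->|_]; first by rewrite (negbTE (adjxx a)) andbF.
by case: (eqVneq x b) => [->|_]; rewrite ?(negbTE (adjxx b)) ?andbF.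
Qed.

Lemma card_nbhdD1 x y : y \in nbhd E x -> #|nbhd E x :\ y| = deg E x - 1.
Proof. by rewrite /deg (cardsD1 y (nbhd E x)) => ->; rewrite add1n subn1. Qed.

Lemma non_nbhdF u w : w \in nbhd E u -> (w \in non_nbhd E u) = false.
Proof. by rewrite in_nbhd in_non_nbhd => ->; rewrite andbF. Qed.

Lemma card_nbhdI_non_nbhd_lt_deg u w :
  w \in nbhd E u -> #|nbhd E w :&: non_nbhd E u| < deg E w.
Proof.
move=> uw; apply: (@card_setI_ltn _ _ _ u); first by rewrite in_nbhd adjC -in_nbhd.
by rewrite !inE eqxx.
Qed.

Lemma card_nbhdI_ltn (S : {set V}) x : x \in S -> #|nbhd E x :&: S| < #|S|.
Proof.
by move=> xS; rewrite setIC (card_setI_ltn xS) // in_nbhd adjxx.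
Qed.

Lemma joint_nbhd_lower_bound u w : w \in nbhd E u ->
  deg E u - 1 + #|nbhd E w :&: non_nbhd E u| <= #|joint_nbhd E u w|.
Proof.
move=> uw; rewrite -(card_nbhdD1 uw); apply: leq_card_disjointU.
  by rewrite disjoints_subset; apply/subsetP => x; rewrite !inE => /andP [_ ->]; rewrite orbT andbF.
rewrite joint_nbhdE; apply: setUS; apply/subsetP => x; rewrite !inE negb_or.
by case/andP=> -> /andP [->].
Qed.

Lemma joint_nbhd_lower_bound_across (S : {set V}) w x :
  x \in S -> w \notin S -> adj E w x ->
  deg E w + #|nbhd E x :&: S| <= #|joint_nbhd E w x| + #|nbhd E w :&: S|.
Proof.
move=> xS wS wx; set A := nbhd E x :&: S.
have xw : x \in nbhd E w by rewrite in_nbhd.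
have lt_AwS : #|A :&: nbhd E w| < #|nbhd E w :&: S|.
  rewrite /A setIC [nbhd E x :&: _]setIC setIA.
  by apply: (card_setI_ltn (y := x)); rewrite !inE ?wx ?xS ?adjxx.
have splitA := cardsID (nbhd E w) A.
have le_joint : #|nbhd E w :\ x| + #|A :\: nbhd E w| <= #|joint_nbhd E w x|.
  apply: leq_card_disjointU.
    by rewrite disjoints_subset; apply/subsetP => y; rewrite !inE => /andP [_ ->].
  rewrite joint_nbhdE setUS //; apply/subsetP => y; rewrite !inE.
  case/and3P=> _ -> yS; rewrite andbT.
  by apply: contraNneq wS => <-.
have deg_w_gt0 : 0 < deg E w by apply/card_gt0P; exists x.
have := card_nbhdD1 xw; lia.
Qed.

Lemma card_nbhdI (A : {set V}) w : #|nbhd E w :&: A| = \sum_(x in A) adj E w x.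
Proof. by rewrite sum_pred_card; apply: eq_card => x; rewrite !inE andbC. Qed.

Lemma sum_card_nbhdI (A B : {set V}) :
  \sum_(x in A) #|nbhd E x :&: B| = \sum_(w in B) #|nbhd E w :&: A|.
Proof.
under eq_bigr do rewrite card_nbhdI; rewrite exchange_big /=.
by apply: eq_bigr => w _; rewrite card_nbhdI; under eq_bigr do rewrite adjC.
Qed.

Lemma sum_adj_weighted (A B : {set V}) (F : V -> nat) :
  \sum_(x in A) \sum_(w in B) adj E w x * F w = \sum_(w in B) #|nbhd E w :&: A| * F w.
Proof. by rewrite exchange_big; apply: eq_bigr => w _; rewrite card_nbhdI big_distrl. Qed.

Lemma card_non_nbhd u : #|non_nbhd E u| + deg E u + 1 = #|V|.
Proof.
by rewrite -(cardsC (u |: nbhd E u)) cardsU1 in_nbhd adjxx /deg /non_nbhd /=; lia.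
Qed.

Lemma sum_split_nbhd (F : V -> nat) u :
  \sum_x F x = F u + \sum_(w in nbhd E u) F w + \sum_(x in non_nbhd E u) F x.
Proof.
rewrite (bigID (mem (u |: nbhd E u))) /= -big_setU1 ?in_nbhd ?adjxx //.
by congr (_ + _); apply: eq_bigl => x; rewrite !inE.
Qed.

Lemma deg_non_nbhd_split u x : x \in non_nbhd E u ->
  deg E x = #|nbhd E x :&: non_nbhd E u| + #|nbhd E x :&: nbhd E u|.
Proof.
rewrite in_non_nbhd => /andP [_ ux].
rewrite /deg -(cardsID (non_nbhd E u) (nbhd E x)); congr (_ + _).
apply: eq_card => y; rewrite !inE negbK.
case: (eqVneq y u) => [->|_] /=; last by rewrite andbC.
by rewrite adjC (negbTE ux) (negbTE (adjxx u)).
Qed.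

Lemma sum_deg_split_nbhd u :
  \sum_x deg E x = deg E u
    + \sum_(w in nbhd E u) (deg E w + #|nbhd E w :&: non_nbhd E u|)
    + \sum_(x in non_nbhd E u) #|nbhd E x :&: non_nbhd E u|.
Proof.
rewrite (sum_split_nbhd _ u) big_split /= -!addnA; congr (_ + (_ + _)).
rewrite (eq_bigr _ (fun x => deg_non_nbhd_split (u := u) (x := x))) big_split /=.
by rewrite addnC sum_card_nbhdI.
Qed.

End GraphBasics.

Definition joint_nbhd_bounded (V : finType) (E : {set {set V}}) (k : nat) : Prop :=
  forall a b, adj E a b -> k <= deg E a -> 4 <= deg E b ->
  #|joint_nbhd E a b| <= k + 1.

(* The copy sends v_0, v_1 to u, w, then v_2, ..., v_{n-4} into A and
   v_{n-3}, v_{n-2}, v_{n-1} into B. *)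
Lemma contains_T3 n (V : finType) (E : {set {set V}}) (u w : V) (A B : {set V}) :
  is_graph E -> 6 <= n -> adj E u w ->
  A \subset nbhd E u :\ w -> B \subset nbhd E w :\ u -> [disjoint A & B] ->
  #|A| = n - 5 -> #|B| = 3 -> contains_copy (T3 n) E.
Proof.
move=> graphE le6n uw sA sB dAB cA cB.
have inA y : y \in A -> (y != w) && adj E u y.
  by move/(subsetP sA); rewrite !inE.
have inB y : y \in B -> (y != u) && adj E w y.
  by move/(subsetP sB); rewrite !inE.
set s := [:: u, w & enum A ++ enum B].
have size_s : size s = n by rewrite /= size_cat -!cardE cA cB; lia.
have uniq_s : uniq s.
  have uA : u \notin A by apply/negP => /inA; rewrite (negbTE (adjxx graphE u)) andbF.
  have wB : w \notin B by apply/negP => /inB; rewrite (negbTE (adjxx graphE w)) andbF.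
  have wA : w \notin A by apply/negP => /inA; rewrite eqxx.
  have uB : u \notin B by apply/negP => /inB; rewrite eqxx.
  have neq_uw : u != w by apply: contraTneq uw => ->; apply: adjxx.
  rewrite /= !inE !mem_cat !mem_enum cat_uniq !enum_uniq /= andbT !negb_or.
  rewrite uA wB wA uB neq_uw /=.
  by apply/hasPn => y; rewrite !mem_enum => /(disjointFl dAB) ->.
have nth_A i : i < n - 5 -> adj E u (nth u s i.+2).
  move=> lt_i; rewrite /= nth_cat -cardE cA lt_i.
  by have /inA /andP [] : nth u (enum A) i \in A by rewrite -mem_enum mem_nth // -cardE cA.
have nth_B i : n - 5 <= i < n - 2 -> adj E w (nth u s i.+2).
  case/andP=> le_i lt_i; rewrite /= nth_cat -cardE cA ltnNge le_i /=.
  have : nth u (enum B) (i - (n - 5)) \in B by rewrite -mem_enum mem_nth // -cardE cB; lia.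
  by case/inB/andP.
apply/existsP; exists [ffun i : 'I_n => nth u s i]; apply/andP; split.
  apply/injectiveP => i j; rewrite !ffunE => /eqP; rewrite nth_uniq ?size_s //.
  by move=> /eqP; apply: val_inj.
apply/forall_inP => e /imset2P [x y _]; rewrite inE /T3_adj /= => xy ->.
rewrite imsetU1 imset_set1 !ffunE; change (adj E (nth u s x) (nth u s y)).
have lt_yn := ltn_ord y.
case/orP: xy => /andP [/eqP -> /andP [le1y le_y]].
  have [-> // | lt1y] : nat_of_ord y = 1 \/ 1 < y by lia.
  have -> : nat_of_ord y = (y - 2).+2 by lia.
  by apply: nth_A; lia.
have -> : nat_of_ord y = (y - 2).+2 by lia.
by apply: nth_B; lia.
Qed.

Lemma T3_free_joint_nbhd_bounded n (V : finType) (E : {set {set V}}) :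
  is_graph E -> 6 <= n -> ~~ contains_copy (T3 n) E -> joint_nbhd_bounded E (n - 4).
Proof.
move=> graphE le6n T3_free a b ab le_a le_b; rewrite leqNgt.
apply: contra T3_free => gt_joint.
have cX : n - 5 <= #|nbhd E a :\ b| by rewrite card_nbhdD1 ?in_nbhd //; lia.
have cY : 3 <= #|nbhd E b :\ a| by rewrite card_nbhdD1 ?in_nbhd 1?adjC //; lia.
have cXY : n - 5 + 3 <= #|(nbhd E a :\ b) :|: (nbhd E b :\ a)|.
  by rewrite -joint_nbhdE; lia.
have [A [B [sA sB dAB cA cB]]] := exists_disjoint_subsets cX cY cXY.
exact: (contains_T3 graphE le6n ab sA sB dAB cA cB).
Qed.

Section MaxDegree.
Variables (V : finType) (E : {set {set V}}) (k : nat) (u : V).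
Hypotheses (graphE : is_graph E) (le6k : 6 <= k) (card_V : #|V| = 2 * k + 1).
Hypotheses (boundedE : joint_nbhd_bounded E k) (u_max : forall x, deg E x <= deg E u).

Local Notation D := (deg E u).
Local Notation R := (non_nbhd E u).

Let card_R : #|R| + D = 2 * k.
Proof. by have := card_non_nbhd graphE u; lia. Qed.

Let sum_R_le : \sum_(x in R) #|nbhd E x :&: R| <= #|R| * (#|R| - 1).
Proof. by apply: leq_sum_const => x xR; have := card_nbhdI_ltn graphE xR; lia. Qed.

Let sum_deg_le c : (forall w, w \in nbhd E u -> deg E w + #|nbhd E w :&: R| <= c) ->
  \sum_x deg E x <= D + D * c + #|R| * (#|R| - 1).
Proof.
move=> le_c; rewrite (sum_deg_split_nbhd graphE u).
by rewrite leq_add // leq_add2l; apply: leq_sum_const.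
Qed.

Let card_nbhdI_R_le w : k <= D -> w \in nbhd E u -> 4 <= deg E w ->
  #|nbhd E w :&: R| + D <= k + 2.
Proof.
move=> le_kD uw le4w.
have uw_adj : adj E u w by rewrite -in_nbhd.
have := joint_nbhd_lower_bound graphE uw.
have := boundedE uw_adj le_kD le4w; lia.
Qed.

Let small_nbhd_term w : w \in nbhd E u -> deg E w < 4 ->
  deg E w + #|nbhd E w :&: R| <= 5.
Proof. by move=> uw lt_w4; have := card_nbhdI_non_nbhd_lt_deg uw; lia. Qed.

Lemma sum_deg_maxdeg_lt : D < k -> \sum_x deg E x <= 2 * k * k + 12.
Proof.
move=> lt_Dk; have : \sum_x deg E x <= #|V| * D.
  by rewrite -sum_nat_const; apply: leq_sum => x _.
by rewrite card_V => le_sum; nia.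
Qed.

Lemma sum_deg_maxdeg_gt : k + 2 < D -> \sum_x deg E x <= 2 * k * k + 12.
Proof.
move=> lt_D; have : \sum_x deg E x <= D + D * 5 + #|R| * (#|R| - 1).
  apply: sum_deg_le => w uw; rewrite small_nbhd_term // ltnNge.
  by apply: contraTN lt_D => le4w; have := card_nbhdI_R_le _ uw le4w; lia.
have : #|R| * (#|R| - 1) <= (k - 3) * (k - 4) by apply: leq_mul; lia.
nia.
Qed.

Lemma sum_deg_maxdeg_eq_add2 : D = k + 2 -> \sum_x deg E x <= 2 * k * k + 12.
Proof.
move=> eq_D; have : \sum_x deg E x <= D + D * D + #|R| * (#|R| - 1).
  apply: sum_deg_le => w uw; case: (ltnP (deg E w) 4) => [lt_w4 | le4w].
    by have := small_nbhd_term uw lt_w4; lia.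
  by have := card_nbhdI_R_le _ uw le4w; have := u_max w; lia.
have -> : #|R| = k - 2 by lia.
rewrite eq_D; nia.
Qed.

Lemma sum_deg_maxdeg_eq_add1 : D = k + 1 -> \sum_x deg E x <= 2 * k * k + 12.
Proof.
move=> eq_D; have card_R1 : #|R| = k - 1 by lia.
have le_kD : k <= D by lia.
(* Either a vertex w of N(u) of degree k + 1 has a neighbour z in R, and then
   z has at most two neighbours in R, or every w in N(u) contributes at most
   k + 1 to the degree sum. *)
case: (pickP [pred wz : V * V | [&& wz.1 \in nbhd E u, wz.2 \in R,
                                    adj E wz.1 wz.2 & deg E wz.1 == k + 1]]).
  move=> [w z] /and4P [/= uw zR wz /eqP deg_w].
  have le1_w : #|nbhd E w :&: R| <= 1 by have := card_nbhdI_R_le le_kD uw; lia.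
  have le2_z : #|nbhd E z :&: R| <= 2.
    case: (ltnP (deg E z) 4) => [lt_z4 | le4z].
      have : 0 < #|nbhd E z :&: nbhd E u|.
        by apply/card_gt0P; exists w; rewrite inE uw andbT in_nbhd adjC.
      by have := deg_non_nbhd_split graphE zR; lia.
    have := joint_nbhd_lower_bound_across graphE zR (negbT (non_nbhdF uw)) wz.
    have le_kw : k <= deg E w by rewrite deg_w leq_addr.
    by have := boundedE wz le_kw le4z; lia.
  have : \sum_(x in R :\ z) #|nbhd E x :&: R| <= #|R :\ z| * (k - 2).
    apply: leq_sum_const => x /setD1P [_ xR].
    by have := card_nbhdI_ltn graphE xR; lia.
  have : \sum_(w in nbhd E u) (deg E w + #|nbhd E w :&: R|) <= D * (k + 2).
    apply: leq_sum_const => w' uw'; case: (ltnP (deg E w') 4) => [lt_w4 | le4w].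
      by have := small_nbhd_term uw' lt_w4; lia.
    by have := card_nbhdI_R_le le_kD uw' le4w; have := u_max w'; lia.
  have := cardsD1 z R; rewrite zR (sum_deg_split_nbhd graphE u) (big_setD1 z zR) /=.
  by nia.
move=> no_pair; have : \sum_x deg E x <= D + D * (k + 1) + #|R| * (#|R| - 1).
  apply: sum_deg_le => w uw; case: (ltnP (deg E w) 4) => [lt_w4 | le4w].
    by have := small_nbhd_term uw lt_w4; lia.
  have := card_nbhdI_R_le le_kD uw le4w; have := u_max w.
  case: (eqVneq (deg E w) (k + 1)) => [deg_w | ]; last by lia.
  case: (set_0Vmem (nbhd E w :&: R)) => [-> | [z]]; first by rewrite cards0; lia.
  by case/setIP => wz zR; have := no_pair (w, z); rewrite /= uw zR -in_nbhd wz deg_w eqxx.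
by rewrite card_R1 eq_D; nia.
Qed.

Section MaxDegreeEqK.
Hypothesis eq_D : D = k.

Let card_nbhdI_R_le2 w : w \in nbhd E u -> #|nbhd E w :&: R| <= 2.
Proof.
move=> uw; case: (ltnP (deg E w) 4) => [lt_w4 | le4w].
  by have := card_nbhdI_non_nbhd_lt_deg uw; lia.
by have := card_nbhdI_R_le (eq_leq (esym eq_D)) uw le4w; lia.
Qed.

Let deg_nbhd_le x w : x \in R -> deg E x = k -> w \in nbhd E u -> adj E w x ->
  deg E w <= 3 + #|nbhd E x :&: nbhd E u|.
Proof.
move=> xR deg_x uw wx; case: (ltnP (deg E w) 4) => [lt_w4 | le4w]; first lia.
have := joint_nbhd_lower_bound_across graphE xR (negbT (non_nbhdF uw)) wx.
have xw : adj E x w by rewrite adjC.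
have := boundedE xw (eq_leq (esym deg_x)) le4w; rewrite joint_nbhdC.
have := card_nbhdI_R_le2 uw; have := deg_non_nbhd_split graphE xR; lia.
Qed.

Let slack := fun w => k - deg E w.

(* A vertex x of R of degree k has a neighbour w in N(u); since the edge wx
   satisfies the local condition, the deficit k - deg w of w compensates for the
   neighbours of x outside R. *)
Let deg_k_le_slack x : x \in R -> deg E x = k ->
  k <= \sum_(w in nbhd E u) adj E w x * slack w + #|nbhd E x :&: nbhd E u| + 3.
Proof.
move=> xR deg_x.
have : 0 < #|nbhd E x :&: nbhd E u|.
  by have := card_nbhdI_ltn graphE xR; have := deg_non_nbhd_split graphE xR; lia.
case/card_gt0P => w /setIP [xw uw]; rewrite in_nbhd adjC in xw.
have := deg_nbhd_le xR deg_x uw xw.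
have : slack w <= \sum_(w in nbhd E u) adj E w x * slack w.
  by rewrite (bigD1 w) //= xw mul1n leq_addr.
by rewrite /slack; lia.
Qed.

Lemma sum_deg_maxdeg_eq : \sum_x deg E x <= 2 * k * k + 12.
Proof.
set T := [set x in R | deg E x == k]; set Dd := \sum_(w in nbhd E u) slack w.
have card_Rk : #|R| = k by lia.
have sum_R : \sum_(x in R) deg E x <= #|R| * (k - 1) + #|T|.
  rewrite /T -sum_pred_card -sum_nat_const -big_split /=; apply: leq_sum => x _.
  by have := u_max x; case: eqP; lia.
have sum_nbhd : \sum_(w in nbhd E u) deg E w + Dd = D * k.
  rewrite /Dd -big_split -sum_nat_const /=; apply: eq_bigr => w _.
  by rewrite /slack subnKC // -eq_D.
have sum_T : #|T| * k <= 2 * Dd + 2 * k + 3 * #|T|.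
  have sTR : T \subset R by apply/subsetP => x; rewrite inE => /andP [].
  apply: (@leq_trans (\sum_(x in T) (\sum_(w in nbhd E u) adj E w x * slack w
                      + #|nbhd E x :&: nbhd E u| + 3))).
    rewrite -sum_nat_const; apply: leq_sum => x.
    by rewrite inE => /andP [xR /eqP /(deg_k_le_slack xR)].
  rewrite !big_split /= sum_nat_const mulnC leq_add2r sum_adj_weighted.
  apply: leq_add.
    rewrite /Dd big_distrr; apply: leq_sum => w uw; rewrite leq_mul2r.
    by apply/orP; right; apply: leq_trans (card_nbhdI_R_le2 uw); apply/subset_leq_card/setIS.
  rewrite (leq_trans (leq_sum_subset _ sTR)) // sum_card_nbhdI // -eq_D.
  by rewrite mulnC; apply: leq_sum_const => w uw; apply: card_nbhdI_R_le2.
have le_T : #|T| <= Dd + 12 by clear -le6k sum_T; nia.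
rewrite (sum_split_nbhd graphE _ u); move: sum_R sum_nbhd; rewrite card_Rk eq_D.
by clear -le6k le_T; nia.
Qed.

End MaxDegreeEqK.

End MaxDegree.

Lemma sum_deg_le_of_joint_nbhd_bounded (V : finType) (E : {set {set V}}) k :
  is_graph E -> 6 <= k -> #|V| = 2 * k + 1 -> joint_nbhd_bounded E k ->
  \sum_x deg E x <= 2 * k * k + 12.
Proof.
move=> graphE le6k card_V boundedE.
have /card_gt0P [x0 _] : 0 < #|V| by rewrite card_V addn1.
have [u _ u_max] := @arg_maxnP V x0 predT (deg E) isT.
have {}u_max x : deg E x <= deg E u by apply: u_max.
case: (ltngtP (deg E u) k) => [lt_Dk | lt_kD | eq_Dk].
- exact: sum_deg_maxdeg_lt graphE le6k card_V u_max lt_Dk.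
- case: (ltngtP (deg E u) (k + 2)) => [lt_D | gt_D | eq_D].
  + have eq_D : deg E u = k + 1 by lia.
    exact: sum_deg_maxdeg_eq_add1 graphE le6k card_V boundedE u_max eq_D.
  + exact: sum_deg_maxdeg_gt graphE le6k card_V boundedE gt_D.
  + exact: sum_deg_maxdeg_eq_add2 graphE le6k card_V boundedE u_max eq_D.
- exact: sum_deg_maxdeg_eq graphE le6k card_V boundedE u_max eq_Dk.
Qed.

Lemma T3_connected n (P : 'I_n -> bool) : 6 <= n ->
  (forall a b, T3_adj a b -> P a = P b) -> forall i j, P i = P j.
Proof.
move=> le6n P_adj.
have lt0n : 0 < n by lia.
have lt1n : 1 < n by lia.
suff P_0 i : P i = P (Ordinal lt0n) by move=> i j; rewrite !P_0.
have P_1 : P (Ordinal lt1n) = P (Ordinal lt0n).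
  by symmetry; apply: P_adj; rewrite /T3_adj /=; lia.
have lt_in := ltn_ord i.
case: (posnP i) => [i0 | gt0i]; first by congr P; apply: val_inj.
case: (leqP i (n - 4)) => le_i; first by symmetry; apply: P_adj; rewrite /T3_adj /=; lia.
by rewrite -P_1; symmetry; apply: P_adj; rewrite /T3_adj /=; lia.
Qed.

Definition two_cliques (c p : nat) : {set {set 'I_p}} :=
  let side := [set x : 'I_p | x < c] in
  [set e : {set 'I_p} | (#|e| == 2) && ((e \subset side) || (e \subset ~: side))].

Section TwoCliques.
Variables c p : nat.
Hypothesis le_cp : c <= p.

Lemma adj_two_cliques (x y : 'I_p) :
  adj (two_cliques c p) x y = (x != y) && ((x < c) == (y < c)).
Proof.
rewrite /adj inE cards2 !subUset !sub1set !inE.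
by case: (x != y); case: (x < c); case: (y < c).
Qed.

Lemma two_cliques_graph : is_graph (two_cliques c p).
Proof. by apply/forall_inP => e; rewrite inE => /andP []. Qed.

Lemma card_side : #|[set x : 'I_p | x < c]| = c.
Proof.
have -> : [set x : 'I_p | x < c] = widen_ord le_cp @: [set: 'I_c].
  apply/setP => y; rewrite inE; apply/idP/imsetP => [lt_yc | [i _ ->]].
    by exists (Ordinal lt_yc) => //; apply: val_inj.
  exact: (ltn_ord i).
rewrite card_imset ?cardsT ?card_ord //.
by move=> i j /(congr1 val) eq_ij; apply: val_inj.
Qed.

Lemma card_co_side : #|~: [set x : 'I_p | x < c]| = p - c.
Proof. by have := cardsC [set x : 'I_p | x < c]; rewrite card_side card_ord; lia. Qed.

Lemma deg_two_cliques x :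
  deg (two_cliques c p) x = (if x < c then c else p - c) - 1.
Proof.
rewrite /deg; case: ifP => x_side.
  have -> : nbhd (two_cliques c p) x = [set y : 'I_p | y < c] :\ x.
    apply/setP => y; rewrite !inE adj_two_cliques x_side [x == y]eq_sym.
    by case: (y < c); rewrite ?andbT ?andbF.
  by rewrite -[in RHS]card_side (cardsD1 x [set y : 'I_p | y < c]) inE x_side add1n subn1.
have -> : nbhd (two_cliques c p) x = ~: [set y : 'I_p | y < c] :\ x.
  apply/setP => y; rewrite !inE adj_two_cliques x_side [x == y]eq_sym.
  by case: (y < c); rewrite ?andbT ?andbF.
by rewrite -[in RHS]card_co_side (cardsD1 x (~: [set y : 'I_p | y < c])) !inE x_side add1n subn1.
Qed.

Lemma card_two_cliques :
  2 * #|two_cliques c p| = c * (c - 1) + (p - c) * (p - c - 1).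
Proof.
rewrite -handshake ?two_cliques_graph // (bigID (mem [set x : 'I_p | x < c])) /=.
rewrite (eq_bigr (fun=> c - 1)); last by move=> x; rewrite inE deg_two_cliques => ->.
rewrite [X in _ + X](eq_bigl (mem (~: [set x : 'I_p | x < c]))); last by move=> x; rewrite !inE.
rewrite [X in _ + X](eq_bigr (fun=> p - c - 1)); last first.
  by move=> x; rewrite !inE deg_two_cliques => /negbTE ->.
by rewrite !sum_nat_const card_side card_co_side.
Qed.

Lemma two_cliques_T3_free n :
  6 <= n -> c < n -> p - c < n -> ~~ contains_copy (T3 n) (two_cliques c p).
Proof.
move=> le6n lt_cn lt_pcn; apply/existsP => -[f /andP [/injectiveP inj_f /forall_inP f_edges]].
have same_side i j : (f i < c) = (f j < c).
  apply: (T3_connected (P := fun i => f i < c)) => // a b ab.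
  have /f_edges : [set a; b] \in T3 n by apply/imset2P; exists a b; rewrite ?inE.
  rewrite imsetU1 imset_set1 -[_ \in _]/(adj _ (f a) (f b)) adj_two_cliques.
  by case/andP=> _ /eqP.
have i0 : 'I_n := Ordinal (leq_trans (isT : 0 < 6) le6n).
set side := if f i0 < c then [set x : 'I_p | x < c] else ~: [set x : 'I_p | x < c].
have : f @: [set: 'I_n] \subset side.
  apply/subsetP => _ /imsetP [i _ ->]; rewrite /side (same_side i0 i).
  by case: ifP; rewrite !inE => ->.
move/subset_leq_card; rewrite card_imset // cardsT card_ord /side.
by case: ifP; rewrite ?card_side ?card_co_side; lia.
Qed.

End TwoCliques.

Theorem lemma4p5 (n : nat) (hn : 10 <= n) :
  ex (2 * n - 7) (T3 n) = n ^ 2 - 8 * n + 22.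
Proof.
have le6n : 6 <= n by lia.
have le_cp : n - 1 <= 2 * n - 7 by lia.
rewrite -mulnn /ex; apply/eqP; rewrite eqn_leq; apply/andP; split.
  apply/bigmax_leqP => E /andP [graphE T3_free].
  have card_V : #|'I_(2 * n - 7)| = 2 * (n - 4) + 1 by rewrite card_ord; lia.
  have le6k : 6 <= n - 4 by lia.
  have := sum_deg_le_of_joint_nbhd_bounded graphE le6k card_V
            (T3_free_joint_nbhd_bounded graphE le6n T3_free).
  by rewrite handshake //; nia.
apply: (bigmax_sup (two_cliques (n - 1) (2 * n - 7))).
  by rewrite two_cliques_graph two_cliques_T3_free //; lia.
move: (card_two_cliques le_cp); move: #|_| => m.
have -> : 2 * n - 7 - (n - 1) = n - 6 by lia.
have [j ->] : exists j, n = j + 10 by exists (n - 10); lia.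
by rewrite -!addnBA //=; nia.
Qed.
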